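(* Let $M_1$ and $M_2$ be finite-horizon MDPs with the same state space $\mathcal S$, action space $\mathcal A$, reward space $\mathcal R$ and horizon $H$. If $\max_{s,a}\|P^{M_1}(\cdot\mid s,a)-P^{M_2}(\cdot\mid s,a)\|_1\le\tilde\epsilon_P$ and $\max_{s,a,r}|R^{M_1}(r\mid s,a)-R^{M_2}(r\mid s,a)|\le\tilde\epsilon_R$, then for every policy $\pi$, $$\|\rho_\pi^{M_1}(s)-\rho_\pi^{M_2}(s)\|_1+\|\rho_\pi^{M_1}(s,a,r)-\rho_\pi^{M_2}(s,a,r)\|_1\le|\mathcal S|(|\mathcal A||\mathcal R|+1)\frac{H-1}{2}\tilde\epsilon_P+|\mathcal S||\mathcal A||\mathcal R|\tilde\epsilon_R.$$
   Context: Finite-horizon MDPs have finite spaces, a common fixed initial state $s_0$, and the state space partitioned into disjoint timestep layers $\mathcal S_h$. Visitation distributions of $\pi$ in an MDP with transition $P$ and reward distribution $R$: $\rho_\pi(s_0)=1/H$, $\rho_\pi(s)=\sum_{\tilde s\in\mathcal S_{h-1},\tilde a}\rho_\pi(\tilde s)\pi(\tilde a\mid\tilde s)P(s\mid\tilde s,\tilde a)$ for $s\in\mathcal S_h$, $h>0$; $\rho_\pi(s,a,r)=\rho_\pi(s)\pi(a\mid s)R(r\mid s,a)$. *)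

From mathcomp Require Import all_boot all_order all_algebra.
Set Implicit Arguments. Unset Strict Implicit. Unset Printing Implicit Defensive.
Import Order.TTheory GRing.Theory Num.Theory.
Local Open Scope ring_scope.

Section MDP.
Variables (R : realFieldType) (S A Rw : finType).

(* A layered finite-horizon MDP structure: [layer s] is the timestep h with
   s \in S_h; layers are 0..H-1; S_0 = {s0}. *)
Definition layered (H : nat) (layer : S -> nat) (s0 : S) : Prop :=
  (0 < H)%N /\ (forall s, (layer s < H)%N) /\ layer s0 = 0%N /\
  (forall s, layer s = 0%N -> s = s0).

(* P s a s' = P(s' | s, a); Rf s a r = R(r | s, a). *)
Definition is_kernel (P : S -> A -> S -> R) (Rf : S -> A -> Rw -> R) : Prop :=
  (forall s a s', 0 <= P s a s') /\ (forall s a, \sum_(s' : S) P s a s' = 1) /\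
  (forall s a r, 0 <= Rf s a r) /\ (forall s a, \sum_(r : Rw) Rf s a r = 1).

Definition is_policy (pi : S -> A -> R) : Prop :=
  (forall s a, 0 <= pi s a) /\ (forall s, \sum_(a : A) pi s a = 1).

Fixpoint rho_layer (H : nat) (layer : S -> nat) (s0 : S) (pi : S -> A -> R)
  (P : S -> A -> S -> R) (h : nat) (s : S) : R :=
  match h with
  | 0%N => if s == s0 then (H%:R)^-1 else 0
  | h'.+1 => if layer s == h'.+1 then
      \sum_(st : S | layer st == h')
        \sum_(at_ : A) rho_layer H layer s0 pi P h' st * pi st at_ * P st at_ s
      else 0
  end.

Definition rho_s H layer s0 pi P (s : S) : R :=
  rho_layer H layer s0 pi P (layer s) s.

Definition rho_sar H layer s0 pi P (Rf : S -> A -> Rw -> R) (s : S) (a : A) (r : Rw) : R :=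
  rho_s H layer s0 pi P s * pi s a * Rf s a r.

End MDP.

From mathcomp Require Import all_boot all_order all_algebra.
From mathcomp Require Import ring lra.
Set Implicit Arguments.
Unset Strict Implicit.
Unset Printing Implicit Defensive.

Import Order.TTheory GRing.Theory Num.Theory.
Local Open Scope ring_scope.

(* One policy step maps the layer-h visitation to the layer-(h+1) one and
   propagates l1 errors additively: the distance at layer h+1 is at most the
   distance at layer h plus eps_P times the layer-h mass, and that mass is at
   most 1/H.  Hence layer h contributes at most (h/H) eps_P, and summing over
   the H layers gives (H-1)/2 eps_P for the state visitations.  The (s,a,r)
   visitations add the state error once more plus |Rw| eps_R weighted by a
   total mass <= 1; the stated constants dominate this because every space is
   nonempty. *)

Lemma sum_ord_natr (R : numFieldType) (n : nat) :
  \sum_(i < n) (i%:R : R) = n%:R * (n%:R - 1) / 2.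
Proof.
elim: n => [|n IH]; first by rewrite big_ord0 !mul0r.
by rewrite big_ord_recr /= IH -natr1; field.
Qed.

Lemma sum1_card_gt0 (R : nzRingType) (T : finType) (f : T -> R) :
  \sum_x f x = 1 -> (0 < #|T|)%N.
Proof.
move=> f_sum1; case: (posnP #|T|) => // /card0_eq T0.
by move: f_sum1; rewrite big_pred0 // => /eqP; rewrite eq_sym oner_eq0.
Qed.

Section KernelPerturbation.
Variables (R : numDomainType) (A Y : finType).

Lemma sum_dist_scaled_kernel (m1 m2 : R) (K1 K2 : Y -> R) :
  0 <= m2 -> (forall y, 0 <= K1 y) -> \sum_y K1 y = 1 ->
  \sum_y `|m1 * K1 y - m2 * K2 y|
    <= `|m1 - m2| + m2 * \sum_y `|K1 y - K2 y|.
Proof.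
move=> m2_ge0 K1_ge0 K1_sum1.
rewrite -[X in X + _]mulr1 -K1_sum1 !mulr_sumr -big_split /=.
apply: ler_sum => y _.
have -> : m1 * K1 y - m2 * K2 y = (m1 - m2) * K1 y + m2 * (K1 y - K2 y) by ring.
apply: le_trans (ler_normD _ _) _.
by rewrite !normrM (ger0_norm (K1_ge0 y)) (ger0_norm m2_ge0).
Qed.

Lemma sum_dist_policy_kernel (w : A -> R) (m1 m2 e : R) (K1 K2 : A -> Y -> R) :
  (forall a, 0 <= w a) -> \sum_a w a = 1 -> 0 <= m2 ->
  (forall a y, 0 <= K1 a y) -> (forall a, \sum_y K1 a y = 1) ->
  (forall a, \sum_y `|K1 a y - K2 a y| <= e) ->
  \sum_a \sum_y `|m1 * w a * K1 a y - m2 * w a * K2 a y| <= `|m1 - m2| + m2 * e.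
Proof.
move=> w_ge0 w_sum1 m2_ge0 K1_ge0 K1_sum1 dK.
rewrite -[X in _ <= X]mul1r -w_sum1 mulr_suml.
apply: ler_sum => a _.
have m2w_ge0 : 0 <= m2 * w a by rewrite mulr_ge0.
apply: le_trans (sum_dist_scaled_kernel (m1 * w a) (K2 a) m2w_ge0 (K1_ge0 a) (K1_sum1 a)) _.
rewrite -mulrBl normrM (ger0_norm (w_ge0 a)) mulrDr [w a * `|_|]mulrC lerD2l.
by rewrite mulrAC [w a * _]mulrC ler_wpM2r // ler_wpM2l.
Qed.

End KernelPerturbation.

Section PolicyStep.
Variables (R : numDomainType) (S A : finType) (pi : S -> A -> R).
Hypothesis pi_ge0 : forall s a, 0 <= pi s a.
Hypothesis pi_sum1 : forall s, \sum_a pi s a = 1.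

Definition step (P : S -> A -> S -> R) (mu : S -> R) (s : S) : R :=
  \sum_st \sum_a mu st * pi st a * P st a s.

Lemma step_ge0 P mu : (forall s a s', 0 <= P s a s') -> (forall s, 0 <= mu s) ->
  forall s, 0 <= step P mu s.
Proof.
by move=> P_ge0 mu_ge0 s; do 2!apply: sumr_ge0 => ? _; rewrite !mulr_ge0.
Qed.

Lemma sum_step P mu : (forall s a, \sum_s' P s a s' = 1) ->
  \sum_s step P mu s = \sum_s mu s.
Proof.
move=> P_sum1; rewrite exchange_big; apply: eq_bigr => st _.
rewrite exchange_big /= -[RHS]mulr1 -(pi_sum1 st) mulr_sumr.
by apply: eq_bigr => a _; rewrite -mulr_sumr P_sum1 mulr1.
Qed.

Lemma sum_dist_step P1 P2 mu1 mu2 (e : R) :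
  (forall s a s', 0 <= P1 s a s') -> (forall s a, \sum_s' P1 s a s' = 1) ->
  (forall s a, \sum_s' `|P1 s a s' - P2 s a s'| <= e) -> (forall s, 0 <= mu2 s) ->
  \sum_s `|step P1 mu1 s - step P2 mu2 s|
    <= \sum_s `|mu1 s - mu2 s| + e * \sum_s mu2 s.
Proof.
move=> P1_ge0 P1_sum1 dP mu2_ge0.
have triangle s : `|step P1 mu1 s - step P2 mu2 s| <=
    \sum_st \sum_a `|mu1 st * pi st a * P1 st a s - mu2 st * pi st a * P2 st a s|.
  rewrite /step -sumrB; apply: le_trans (ler_norm_sum _ _ _) _.
  by apply: ler_sum => st _; rewrite -sumrB ler_norm_sum.
apply: le_trans (ler_sum _ (fun s _ => triangle s)) _.
rewrite exchange_big mulr_sumr -big_split /=; apply: ler_sum => st _.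
rewrite exchange_big /= [e * _]mulrC.
exact: sum_dist_policy_kernel.
Qed.

Lemma sum_dist_policy_reward (Rw : finType) (R1 R2 : S -> A -> Rw -> R) mu1 mu2 (e : R) :
  (forall s a r, 0 <= R1 s a r) -> (forall s a, \sum_r R1 s a r = 1) ->
  (forall s a r, `|R1 s a r - R2 s a r| <= e) ->
  (forall s, 0 <= mu2 s) -> \sum_s mu2 s <= 1 -> 0 <= e ->
  \sum_s \sum_a \sum_r `|mu1 s * pi s a * R1 s a r - mu2 s * pi s a * R2 s a r|
    <= \sum_s `|mu1 s - mu2 s| + #|Rw|%:R * e.
Proof.
move=> R1_ge0 R1_sum1 dR mu2_ge0 mu2_le1 e_ge0.
have dR_sum s a : \sum_r `|R1 s a r - R2 s a r| <= #|Rw|%:R * e.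
  by rewrite -sum1_card natr_sum mulr_suml ler_sum // => r _; rewrite mul1r.
apply: le_trans (_ : \sum_s (`|mu1 s - mu2 s| + mu2 s * (#|Rw|%:R * e)) <= _).
  by apply: ler_sum => s _; apply: sum_dist_policy_kernel.
by rewrite big_split /= -mulr_suml lerD2l ler_piMl ?mulr_ge0.
Qed.

End PolicyStep.

Section Visitation.
Variables (R : realFieldType) (S A : finType) (H : nat) (layer : S -> nat) (s0 : S)
  (pi : S -> A -> R).
Hypothesis layered_H : layered H layer s0.
Hypothesis pi_ge0 : forall s a, 0 <= pi s a.
Hypothesis pi_sum1 : forall s, \sum_a pi s a = 1.

Local Notation rho := (rho_layer H layer s0 pi).

Lemma rho_layer_ge0 P : (forall s a s', 0 <= P s a s') -> forall h s, 0 <= rho P h s.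
Proof.
move=> P_ge0; elim=> [|h IH] s /=; case: ifP => // _; first by rewrite invr_ge0.
by do 2!apply: sumr_ge0 => ? _; rewrite !mulr_ge0.
Qed.

Lemma rho_layer_eq0 P h s : layer s != h -> rho P h s = 0.
Proof.
case: layered_H => _ [_ [layer_s0 _]].
case: h => [|h] /= s_h; last by rewrite (negPf s_h).
by case: (s =P s0) s_h => // ->; rewrite layer_s0.
Qed.

Lemma rho_layerS P h s :
  rho P h.+1 s = if layer s == h.+1 then step pi P (rho P h) s else 0.
Proof.
rewrite /=; case: ifP => // _; apply: big_rmcond => st st_h.
by apply: big1 => a _; rewrite rho_layer_eq0 // !mul0r.
Qed.

Lemma sum_rho_layer_le P :
  (forall s a s', 0 <= P s a s') -> (forall s a, \sum_s' P s a s' = 1) ->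
  forall h, \sum_s rho P h s <= H%:R^-1.
Proof.
move=> P_ge0 P_sum1; elim=> [|h IH].
  by rewrite (bigD1 s0) //= eqxx big1 ?addr0 // => s /negPf /= ->.
apply: le_trans IH; rewrite -(sum_step pi_sum1 (rho P h) P_sum1); apply: ler_sum => s _.
by rewrite rho_layerS; case: ifP => // _; apply: step_ge0 => //; apply: rho_layer_ge0.
Qed.

Lemma sum_dist_rho_layer P1 P2 (e : R) :
  (forall s a s', 0 <= P1 s a s') -> (forall s a, \sum_s' P1 s a s' = 1) ->
  (forall s a s', 0 <= P2 s a s') -> (forall s a, \sum_s' P2 s a s' = 1) ->
  (forall s a, \sum_s' `|P1 s a s' - P2 s a s'| <= e) -> 0 <= e ->
  forall h, \sum_s `|rho P1 h s - rho P2 h s| <= h%:R / H%:R * e.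
Proof.
move=> P1_ge0 P1_sum1 P2_ge0 P2_sum1 dP e_ge0; elim=> [|h IH].
  by rewrite big1 ?mul0r // => s _; rewrite subrr normr0.
apply: (@le_trans _ _ (\sum_s `|step pi P1 (rho P1 h) s - step pi P2 (rho P2 h) s|)).
  by apply: ler_sum => s _; rewrite !rho_layerS; case: ifP; rewrite ?subrr ?normr0.
apply: le_trans (sum_dist_step pi_ge0 pi_sum1 (rho P1 h) P1_ge0 P1_sum1 dP
  (rho_layer_ge0 P2_ge0 h)) _.
rewrite -natr1 mulrDl mulrDl div1r lerD // mulrC.
by apply: ler_wpM2r => //; apply: sum_rho_layer_le.
Qed.

Lemma sum_by_layer (F : nat -> S -> R) :
  (forall h s, layer s != h -> F h s = 0) ->
  \sum_s F (layer s) s = \sum_(h < H) \sum_s F h s.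
Proof.
case: layered_H => _ [layer_lt _] F_eq0.
rewrite exchange_big; apply: eq_bigr => s _.
rewrite (bigD1 (Ordinal (layer_lt s))) //= big1 ?addr0 // => h h_ne.
by apply: F_eq0; apply: contra h_ne => /eqP s_h; apply/eqP/val_inj.
Qed.

Lemma sum_rho_s_le1 P :
  (forall s a s', 0 <= P s a s') -> (forall s a, \sum_s' P s a s' = 1) ->
  \sum_s rho_s H layer s0 pi P s <= 1.
Proof.
move=> P_ge0 P_sum1; case: (layered_H) => H_gt0 _.
rewrite (sum_by_layer (F := rho P)); last exact: rho_layer_eq0.
apply: le_trans (_ : \sum_(h < H) H%:R^-1 <= _).
  by apply: ler_sum => h _; apply: sum_rho_layer_le.
by rewrite sumr_const card_ord -[X in X <= _]mulr_natr mulVf // pnatr_eq0 -lt0n.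
Qed.

Lemma sum_dist_rho_s P1 P2 (e : R) :
  (forall s a s', 0 <= P1 s a s') -> (forall s a, \sum_s' P1 s a s' = 1) ->
  (forall s a s', 0 <= P2 s a s') -> (forall s a, \sum_s' P2 s a s' = 1) ->
  (forall s a, \sum_s' `|P1 s a s' - P2 s a s'| <= e) -> 0 <= e ->
  \sum_s `|rho_s H layer s0 pi P1 s - rho_s H layer s0 pi P2 s| <= (H%:R - 1) / 2 * e.
Proof.
move=> P1_ge0 P1_sum1 P2_ge0 P2_sum1 dP e_ge0; case: (layered_H) => H_gt0 _.
rewrite (sum_by_layer (F := fun h s => `|rho P1 h s - rho P2 h s|)); last first.
  by move=> h s s_h; rewrite !rho_layer_eq0 // subrr normr0.
apply: le_trans (_ : \sum_(h < H) h%:R / H%:R * e <= _).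
  by apply: ler_sum => h _; apply: sum_dist_rho_layer.
rewrite -!mulr_suml sum_ord_natr (_ : _ / H%:R = (H%:R - 1) / 2) //.
by field; rewrite pnatr_eq0 -lt0n.
Qed.

End Visitation.

Theorem lemma8 (R : realFieldType) (S A Rw : finType) (H : nat)
  (layer : S -> nat) (s0 : S)
  (P1 P2 : S -> A -> S -> R) (R1 R2 : S -> A -> Rw -> R) (epsP epsR : R) :
  layered H layer s0 ->
  is_kernel P1 R1 -> is_kernel P2 R2 ->
  (forall s a, \sum_(s' : S) `|P1 s a s' - P2 s a s'| <= epsP) ->
  (forall s a r, `|R1 s a r - R2 s a r| <= epsR) ->
  forall pi : S -> A -> R, is_policy pi ->
  \sum_(s : S) `|rho_s H layer s0 pi P1 s - rho_s H layer s0 pi P2 s|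
  + \sum_(s : S) \sum_(a : A) \sum_(r : Rw)
      `|rho_sar H layer s0 pi P1 R1 s a r - rho_sar H layer s0 pi P2 R2 s a r|
  <= #|S|%:R * (#|A|%:R * #|Rw|%:R + 1) * ((H%:R - 1) / 2) * epsP
     + #|S|%:R * #|A|%:R * #|Rw|%:R * epsR.
Proof.
move=> layered_H [P1_ge0 [P1_sum1 [R1_ge0 R1_sum1]]] [P2_ge0 [P2_sum1 _]] dP dR
  pi [pi_ge0 pi_sum1].
have [a _] := card_gt0P (sum1_card_gt0 (pi_sum1 s0)).
have [r _] := card_gt0P (sum1_card_gt0 (R1_sum1 s0 a)).
have eP_ge0 : 0 <= epsP := le_trans (sumr_ge0 _ (fun _ _ => normr_ge0 _)) (dP s0 a).
have eR_ge0 : 0 <= epsR := le_trans (normr_ge0 _) (dR s0 a r).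
have dS := sum_dist_rho_s layered_H pi_ge0 pi_sum1 P1_ge0 P1_sum1 P2_ge0 P2_sum1 dP eP_ge0.
have rho2_ge0 s : 0 <= rho_s H layer s0 pi P2 s by apply: rho_layer_ge0.
have dSAR := sum_dist_policy_reward pi_ge0 pi_sum1 (rho_s H layer s0 pi P1)
  R1_ge0 R1_sum1 dR rho2_ge0
  (sum_rho_s_le1 layered_H pi_ge0 pi_sum1 P2_ge0 P2_sum1) eR_ge0.
have cS : 1 <= #|S|%:R :> R by rewrite ler1n; apply/card_gt0P; exists s0.
have cA : 1 <= #|A|%:R :> R by rewrite ler1n; apply/card_gt0P; exists a.
have cRw : 1 <= #|Rw|%:R :> R by rewrite ler1n; apply/card_gt0P; exists r.
have cAR : 1 <= #|A|%:R * #|Rw|%:R :> R := mulr_ege1 cA cRw.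
have c_ge2 : 2 <= #|S|%:R * (#|A|%:R * #|Rw|%:R + 1) :> R.
  by apply: le_trans (ler_peMl _ cS); lra.
have dS_bound_ge0 : 0 <= (H%:R - 1) / 2 * epsP.
  by case: layered_H => H_gt0 _; rewrite mulr_ge0 // divr_ge0 // subr_ge0 ler1n.
have dS_bound_scaled := ler_wpM2r dS_bound_ge0 c_ge2.
have eR_scaled := ler_peMl (mulr_ge0 (ler0n _ #|Rw|) eR_ge0) (mulr_ege1 cS cA).
rewrite /rho_sar; lra.
Qed.
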